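(* Let $A$ be a linear space with two multiplications $\cdot,\ast:A\otimes A\to A$ and two commuting bijective linear maps $\alpha,\beta:A\to A$ that are multiplicative with respect to both $\cdot$ and $\ast$, such that $(A,\cdot,\alpha,\beta)$ is a BiHom-commutative algebra. Then $(x\cdot\beta(y))\ast\alpha\beta(z)=(x\ast\beta(z))\cdot\alpha\beta(y)$ holds for all $x,y,z\in A$ if and only if $\alpha(x)\cdot(y\ast z)=(x\cdot y)\ast\beta(z)$ holds for all $x,y,z\in A$.
   Context: Work over a field. A BiHom-associative algebra is a 4-tuple $(A,\cdot,\alpha,\beta)$ with $\alpha,\beta:A\to A$ commuting linear maps, multiplicative for $\cdot$, and $\alpha(x)\cdot(y\cdot z)=(x\cdot y)\cdot\beta(z)$ for all $x,y,z$; it is BiHom-commutative if moreover $\beta(a)\cdot\alpha(b)=\beta(b)\cdot\alpha(a)$ for all $a,b$. *)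

From HB Require Import structures.
From mathcomp Require Import all_boot all_order all_algebra.
Set Implicit Arguments. Unset Strict Implicit. Unset Printing Implicit Defensive.
Import GRing.Theory.
Local Open Scope ring_scope.

(* A multiplication A ⊗ A -> A, represented as a bilinear map A -> A -> A. *)
Definition bilinear_mul (K : fieldType) (A : lmodType K) (m : A -> A -> A) :=
  (forall x, linear (m x)) /\ (forall y, linear (fun x => m x y)).

Definition multiplicative_for (A : Type) (m : A -> A -> A) (f : A -> A) :=
  forall x y, f (m x y) = m (f x) (f y).

(* (A, m, alpha, beta) is a BiHom-associative algebra (alpha, beta linear is
   assumed separately). *)
Definition BiHom_assoc (A : Type) (m : A -> A -> A) (alpha beta : A -> A) :=
  [/\ forall x, alpha (beta x) = beta (alpha x),
      multiplicative_for m alpha,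
      multiplicative_for m beta &
      forall x y z, m (alpha x) (m y z) = m (m x y) (beta z)].

Definition BiHom_comm_alg (A : Type) (m : A -> A -> A) (alpha beta : A -> A) :=
  BiHom_assoc m alpha beta /\
  forall a b, m (beta a) (alpha b) = m (beta b) (alpha a).

From HB Require Import structures.
From mathcomp Require Import all_boot all_order all_algebra.
Set Implicit Arguments. Unset Strict Implicit. Unset Printing Implicit Defensive.
Local Open Scope ring_scope.

(* BiHom-commutativity, read with the inverses of alpha and beta, lets one
   move the factors of a product past each other: x . y = beta(alpha^-1 y) .
   alpha(beta^-1 x).  Applying this to both sides of the first identity turns
   it, for all x, y, z, into the second identity evaluated at
   u = beta alpha^-1 beta y, v = alpha beta^-1 x, w = alpha z; since
   (y, x, z) |-> (u, v, w) is onto, the two identities are equivalent. *)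

Lemma can_multiplicative_for (A : Type) (m : A -> A -> A) (f g : A -> A) :
  cancel f g -> cancel g f -> multiplicative_for m f -> multiplicative_for m g.
Proof. by move=> fK gK mf x y; apply: (can_inj fK); rewrite mf !gK. Qed.

Section BiHomCommutativeSwap.

Variables (A : Type) (dot ast : A -> A -> A) (alpha beta ai bi : A -> A).
Hypotheses (alphaK : cancel alpha ai) (aiK : cancel ai alpha).
Hypotheses (betaK : cancel beta bi) (biK : cancel bi beta).
Hypothesis alpha_betaC : forall x, alpha (beta x) = beta (alpha x).
Hypothesis dot_BiHom_comm : forall a b, dot (beta a) (alpha b) = dot (beta b) (alpha a).
Hypotheses (ast_alpha : multiplicative_for ast alpha)
           (ast_beta : multiplicative_for ast beta).

Lemma dot_swap x y : dot x y = dot (beta (ai y)) (alpha (bi x)).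
Proof. by rewrite -dot_BiHom_comm biK aiK. Qed.

Lemma swap_left x y z :
  ast (dot x (beta y)) (alpha (beta z))
  = ast (dot (beta (ai (beta y))) (alpha (bi x))) (beta (alpha z)).
Proof. by rewrite dot_swap alpha_betaC. Qed.

Lemma swap_right x y z :
  dot (ast x (beta z)) (alpha (beta y))
  = dot (alpha (beta (ai (beta y)))) (ast (alpha (bi x)) (alpha z)).
Proof.
have bi_ast := can_multiplicative_for betaK biK ast_beta.
by rewrite dot_swap alphaK bi_ast betaK ast_alpha alpha_betaC aiK.
Qed.

Lemma BiHom_comm_identities_equiv :
  (forall x y z, ast (dot x (beta y)) (alpha (beta z))
                 = dot (ast x (beta z)) (alpha (beta y)))
  <->
  (forall x y z, dot (alpha x) (ast y z) = ast (dot x y) (beta z)).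
Proof.
split=> H.
- move=> u v w.
  have -> : u = beta (ai (beta (bi (alpha (bi u))))) by rewrite biK alphaK biK.
  have -> : v = alpha (bi (beta (ai v))) by rewrite betaK aiK.
  have -> : w = alpha (ai w) by rewrite aiK.
  by rewrite -swap_left -swap_right H.
- by move=> x y z; rewrite swap_left swap_right H.
Qed.

End BiHomCommutativeSwap.

Theorem lemma3p2 (K : fieldType) (A : lmodType K)
  (dot ast : A -> A -> A) (alpha beta : A -> A) :
  bilinear_mul dot -> bilinear_mul ast ->
  linear alpha -> linear beta ->
  bijective alpha -> bijective beta ->
  (forall x, alpha (beta x) = beta (alpha x)) ->
  multiplicative_for dot alpha -> multiplicative_for dot beta ->
  multiplicative_for ast alpha -> multiplicative_for ast beta ->
  BiHom_comm_alg dot alpha beta ->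
  (forall x y z, ast (dot x (beta y)) (alpha (beta z))
                 = dot (ast x (beta z)) (alpha (beta y)))
  <->
  (forall x y z, dot (alpha x) (ast y z) = ast (dot x y) (beta z)).
Proof.
move=> _ _ _ _ [ai alphaK aiK] [bi betaK biK] alpha_betaC _ _ ast_alpha ast_beta
  [_ dot_BiHom_comm].
exact: BiHom_comm_identities_equiv.
Qed.
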